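(* In the setting below, assume $c^2=\gamma p/\rho>0$ and $0<|H|^2\ne\rho c^2$, and restrict to points with $\xi\cdot H\ne0$ and $\xi\times H\ne0$. Let $\Gamma_1,\Gamma_2,\Gamma_3$ be pairwise disjoint conic neighborhoods of $\{q_1=0\},\{q_2=0\},\{q_3=0\}$, and set $q=q_j$ in $\Gamma_j$. Then $P$ is of real principal type with respect to the Hamilton field $H_q$ of $\operatorname{Char}P=\{q=0\}$; that is, at every point of $\operatorname{Char}P$ there is a $3\times 3$ symbol $\tilde p_2$ with $\tilde p_2p_2=q\operatorname{Id}_3$ nearby, with $q$ a scalar symbol of real principal type.
   Context: $\rho,p:\mathbb R^3\to\mathbb R$, $H:\mathbb R^3\to\mathbb R^3$ smooth, $\rho>0$, $\gamma$ constant; $P$ is the $3\times3$ operator on $\mathbb R_t\times\mathbb R^3_x$: $P\beta=-\rho\partial_t^2\beta+\gamma\nabla(p\operatorname{div}\beta)+\nabla(\beta\cdot\nabla p)+(\nabla\times(\nabla\times(\beta\times H)))\times H+(\nabla\times H)\times(\nabla\times(\beta\times H))$, with principal symbol $p_2=(\rho\tau^2-(H\cdot\xi)^2)\operatorname{Id}_3-(\gamma p+|H|^2)\xi\otimes\xi+(H\cdot\xi)(\xi\otimes H+H\otimes\xi)$. $q_1=\rho\tau^2-(H\cdot\xi)^2$, $q_2=\rho(\tau^2-c_s^2(x,\xi))$, $q_3=\rho(\tau^2-c_f^2(x,\xi))$, where $c^2=\gamma p/\rho$, $h^2=|H|^2/\rho$, $b^2=|\xi\times H|^2/\rho$, $c_{f,s}^2(x,\xi)=\tfrac12\big((c^2+h^2)|\xi|^2\pm\sqrt{(c^2-h^2)^2|\xi|^4+4b^2c^2|\xi|^2}\big)$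 ($+$ for $f$, $-$ for $s$). A scalar symbol $q$ is of real principal type if it is real and its Hamilton field $H_q=\sum\partial_{\xi_j}q\,\partial_{x_j}-\partial_{x_j}q\,\partial_{\xi_j}$ is non-vanishing and not in the radial direction where $q=0$. *)

From HB Require Import structures.
From mathcomp Require Import all_boot all_order all_algebra.
From mathcomp Require Import all_classical all_reals all_analysis.
Set Implicit Arguments. Unset Strict Implicit. Unset Printing Implicit Defensive.
Import Order.TTheory GRing.Theory Num.Theory.
Import numFieldNormedType.Exports.
Local Open Scope classical_set_scope.
Local Open Scope ring_scope.

Fixpoint Ck (R : realType) (V : normedModType R) (U : set V) (k : nat) (f : V -> R) : Prop :=
  match k with
  | 0 => forall x, U x -> {for x, continuous f}
  | k'.+1 => (forall x, U x -> differentiable f x) /\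
             (forall v : V, Ck U k' (fun x => derive f x v))
  end.

Definition smooth_on (R : realType) (V : normedModType R) (U : set V) (f : V -> R) :=
  forall k, Ck U k f.

Definition dot3 (R : realType) (u v : 'rV[R]_3) : R := \sum_(i < 3) u ord0 i * v ord0 i.
Definition sqn3 (R : realType) (u : 'rV[R]_3) : R := dot3 u u.
Definition cross3 (R : realType) (u v : 'rV[R]_3) : 'rV[R]_3 :=
  \row_(i < 3) (u ord0 (inord ((i + 1) %% 3)) * v ord0 (inord ((i + 2) %% 3))
              - u ord0 (inord ((i + 2) %% 3)) * v ord0 (inord ((i + 1) %% 3))).

(* ---------- phase space T^*(R_t x R^3_x) = R^8 ----------
   coordinates z = (t, x1, x2, x3, tau, xi1, xi2, xi3) *)
Definition tco (R : realType) (z : 'rV[R]_8) : R := z ord0 (inord 0).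
Definition xco (R : realType) (z : 'rV[R]_8) : 'rV[R]_3 := \row_(i < 3) z ord0 (inord i.+1).
Definition tauco (R : realType) (z : 'rV[R]_8) : R := z ord0 (inord 4).
Definition xico (R : realType) (z : 'rV[R]_8) : 'rV[R]_3 := \row_(i < 3) z ord0 (inord (i + 5)).

Definition pd (R : realType) (a : 'rV[R]_8 -> R) (z : 'rV[R]_8) (k : nat) : R :=
  derive a z (delta_mx ord0 (inord k)).

(* Hamilton field H_a = sum d_eta a d_y - d_y a d_eta, with y = (t,x), eta = (tau,xi) *)
Definition hamilton (R : realType) (a : 'rV[R]_8 -> R) (z : 'rV[R]_8) : 'rV[R]_8 :=
  \row_(i < 8) (if (i < 4)%N then pd a z (i + 4) else - pd a z (i - 4)).

Definition radial (R : realType) (z : 'rV[R]_8) : 'rV[R]_8 :=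
  \row_(i < 8) (if (i < 4)%N then 0 else z ord0 i).

Definition dil (R : realType) (l : R) (z : 'rV[R]_8) : 'rV[R]_8 :=
  \row_(i < 8) (if (i < 4)%N then z ord0 i else l * z ord0 i).

Definition conic (R : realType) (G : set 'rV[R]_8) : Prop :=
  forall z l, G z -> 0 < l -> G (dil l z).

Definition real_principal_type_at (R : realType) (a : 'rV[R]_8 -> R) (z : 'rV[R]_8) : Prop :=
  differentiable a z /\ hamilton a z != 0 /\ ~ (exists c : R, hamilton a z = c *: radial z).

Section MHD.
Variables (R : realType) (rho pr : 'rV[R]_3 -> R) (H : 'rV[R]_3 -> 'rV[R]_3) (gamma : R).

Definition csq (x : 'rV[R]_3) : R := gamma * pr x / rho x.
Definition hsq (x : 'rV[R]_3) : R := sqn3 (H x) / rho x.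
Definition bsq (x xi : 'rV[R]_3) : R := sqn3 (cross3 xi (H x)) / rho x.

Definition cfsq (x xi : 'rV[R]_3) : R :=
  ((csq x + hsq x) * sqn3 xi
   + Num.sqrt ((csq x - hsq x) ^+ 2 * sqn3 xi ^+ 2 + 4 * bsq x xi * csq x * sqn3 xi)) / 2.
Definition cssq (x xi : 'rV[R]_3) : R :=
  ((csq x + hsq x) * sqn3 xi
   - Num.sqrt ((csq x - hsq x) ^+ 2 * sqn3 xi ^+ 2 + 4 * bsq x xi * csq x * sqn3 xi)) / 2.

Definition q1 (z : 'rV[R]_8) : R :=
  rho (xco z) * tauco z ^+ 2 - (dot3 (H (xco z)) (xico z)) ^+ 2.
Definition q2 (z : 'rV[R]_8) : R := rho (xco z) * (tauco z ^+ 2 - cssq (xco z) (xico z)).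
Definition q3 (z : 'rV[R]_8) : R := rho (xco z) * (tauco z ^+ 2 - cfsq (xco z) (xico z)).

Definition qj (j : 'I_3) : 'rV[R]_8 -> R :=
  if val j == 0%N then q1 else if val j == 1%N then q2 else q3.

Definition p2 (z : 'rV[R]_8) : 'M[R]_3 :=
  let x := xco z in let xi := xico z in let Hx := H x in
  \matrix_(i < 3, j < 3)
    (q1 z * (i == j)%:R
     - (gamma * pr x + sqn3 Hx) * (xi ord0 i * xi ord0 j)
     + dot3 Hx xi * (xi ord0 i * Hx ord0 j + Hx ord0 i * xi ord0 j)).

Definition Dom (z : 'rV[R]_8) : Prop :=
  dot3 (xico z) (H (xco z)) != 0 /\ cross3 (xico z) (H (xco z)) != 0.

End MHD.

(* On the region ξ·H ≠ 0, ξ×H ≠ 0 the discriminant under the square root in c_{f,s}²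
   is positive, so the three symbols q_j are smooth there and all have the form
   q_j = ρ(τ² − c_j²) with c_1² = (H·ξ)²/ρ, c_2² = c_s², c_3² = c_f², each c_j² > 0;
   moreover det p_2 = q_1 q_2 q_3.  At a point of Char P where q_j = 0, disjointness of
   the Γ_k keeps the other two factors away from zero, so Q = ∏_{k≠j} q_k is invertible
   nearby and p̃_2 = Q⁻¹ adj p_2 satisfies p̃_2 p_2 = q_j Id.  Finally c_j² > 0 forces
   τ ≠ 0 on {q_j = 0}, hence ∂_τ q_j = 2ρτ ≠ 0.  This is the t-component of H_{q_j},
   while the radial field has no t-component, so H_{q_j} is neither zero nor radial. *)

From HB Require Import structures.
From mathcomp Require Import all_boot all_order all_algebra.
From mathcomp Require Import all_classical all_reals all_analysis.
From mathcomp Require Import ring lra.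
Import Order.TTheory GRing.Theory Num.Theory.
Import numFieldNormedType.Exports.
Local Open Scope classical_set_scope.
Local Open Scope ring_scope.

Lemma near_eq_differentiable {R : realType} {V W : normedModType R} (f g : V -> W) x :
  (\forall y \near x, f y = g y) -> differentiable f x -> differentiable g x.
Proof.
(* ['d g x] is chosen by [get], so it suffices to show that ['d f x] is a differential of g. *)
move=> fg df; apply/diffP.
pose P (dg : {linear V -> W}) := continuous dg /\ forall y,
  g y = g (lim (nbhs x)) + dg (y - lim (nbhs x)) +o_(y \near nbhs x) (y - lim (nbhs x)).
apply: (@getPex _ P); exists ('d f x); split; first exact: diff_continuous.
have gfx : g (lim (nbhs x)) = f (lim (nbhs x)) by rewrite lim_id // (nbhs_singleton fg).
pose F : filter_on V := nbhs x; pose e y := y - lim (nbhs x).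
suff gE : g = (fun y => f (lim (nbhs x)) + 'd f x (e y)) +o_ F e.
  by move=> y; rewrite gfx; exact: (congr1 (fun h => h y) gE).
apply/eqaddoP => eps eps0; have /eqaddoP/(_ eps eps0) := funext (diffE df).
by apply: filterS2 fg => y fgy; rewrite !fctE -fgy.
Qed.

Lemma sqrt_differentiable {R : realType} {r : R} :
  0 < r -> differentiable (@Num.sqrt R) r.
Proof.
by move=> r0; apply/derivable1_diffP; exact: (@ex_derive _ _ _ _ _ _ _ (is_derive1_sqrt r0)).
Qed.

Lemma diff_sqrtE {R : realType} (r t : R) : 0 < r ->
  'd (@Num.sqrt R) r t = t * (2 * Num.sqrt r)^-1.
Proof.
move=> r0; rewrite -[t in LHS]mulr1 -[t * 1]/(t *: (1 : R)) linearZ /=.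
by rewrite -deriveE ?derive_sqrt //; exact: sqrt_differentiable.
Qed.

Section Ck_calculus.
Context {R : realType} {V : normedModType R}.
Variable U : set V.
Hypothesis oU : open U.
Implicit Types (f g : V -> R) (k : nat).

Lemma Ck_ext {k f g} : (forall x, U x -> f x = g x) -> Ck U k f -> Ck U k g.
Proof.
have near_fg f' g' x : (forall x, U x -> f' x = g' x) -> U x ->
    \forall y \near x, f' y = g' y.
  by move=> fg Ux; apply: filterS (open_nbhs_nbhs (conj oU Ux)) => y /fg.
elim: k f g => [|k IHk] f g fg /=.
  move=> cf x Ux; rewrite /prop_for /continuous_at -(fg x Ux).
  by apply: cvg_trans (cf x Ux); apply: near_eq_cvg; exact: near_fg.
case=> df dfv; split=> [x Ux|v].
  exact: near_eq_differentiable (near_fg _ _ _ fg Ux) (df x Ux).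
by apply: IHk (dfv v) => x Ux; apply: near_eq_derive; exact: near_fg.
Qed.

Lemma CkS {k f} : Ck U k.+1 f -> Ck U k f.
Proof.
elim: k f => [|k IHk] f [df dfv] /=.
  by move=> x Ux; exact: differentiable_continuous (df x Ux).
by split => // v; exact: IHk.
Qed.

Lemma Ck_cst k (c : R) : Ck U k (fun=> c).
Proof.
elim: k c => [|k IHk] c /=; first by move=> x _; exact: cvg_cst.
split=> [x _|v]; first exact: differentiable_cst.
by apply: Ck_ext (IHk 0) => x _; rewrite derive_cst.
Qed.

Lemma CkD {k f g} : Ck U k f -> Ck U k g -> Ck U k (fun x => f x + g x).
Proof.
elim: k f g => [|k IHk] f g /=.
  by move=> cf cg x Ux; apply: cvgD; [exact: cf | exact: cg].
case=> df dfv [dg dgv]; split=> [x Ux|v].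
  exact: differentiableD (df x Ux) (dg x Ux).
apply: Ck_ext (IHk _ _ (dfv v) (dgv v)) => x Ux.
by rewrite [RHS]deriveD //; apply: diff_derivable; [exact: df | exact: dg].
Qed.

Lemma CkM {k f g} : Ck U k f -> Ck U k g -> Ck U k (fun x => f x * g x).
Proof.
elim: k f g => [|k IHk] f g /=.
  by move=> cf cg x Ux; apply: cvgM; [exact: cf | exact: cg].
move=> Cf Cg; have [df dfv] := Cf; have [dg dgv] := Cg.
split=> [x Ux|v]; first exact: differentiableM (df x Ux) (dg x Ux).
apply: Ck_ext (CkD (IHk _ _ (CkS Cf) (dgv v)) (IHk _ _ (CkS Cg) (dfv v))) => x Ux.
by rewrite [RHS]deriveM //; apply: diff_derivable; [exact: df | exact: dg].
Qed.

Lemma CkN {k f} : Ck U k f -> Ck U k (fun x => - f x).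
Proof. by move=> Cf; apply: Ck_ext (CkM (Ck_cst k (-1)) Cf) => x _; rewrite mulN1r. Qed.

Lemma CkX {k f} n : Ck U k f -> Ck U k (fun x => f x ^+ n).
Proof.
move=> Cf; elim: n => [|n IHn]; first by apply: Ck_ext (Ck_cst k 1) => x _.
by apply: Ck_ext (CkM Cf IHn) => x _; rewrite exprS.
Qed.

Lemma CkV {k f} : (forall x, U x -> f x != 0) -> Ck U k f -> Ck U k (fun x => (f x)^-1).
Proof.
move=> f0; elim: k f f0 => [|k IHk] f f0 /=.
  by move=> cf x Ux; apply: cvgV; [exact: f0 | exact: cf].
move=> Cf; have [df dfv] := Cf; have Cf' := IHk _ f0 (CkS Cf).
split=> [x Ux|v]; first exact: differentiableV (df x Ux) (f0 x Ux).
apply: Ck_ext (CkM (CkN (CkM Cf' Cf')) (dfv v)) => x Ux.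
by rewrite [RHS]deriveV ?f0 //; [rewrite -exprVn expr2 | exact/diff_derivable/df].
Qed.

Lemma Ck_sqrt {k f} : (forall x, U x -> 0 < f x) -> Ck U k f ->
  Ck U k (fun x => Num.sqrt (f x)).
Proof.
move=> f0; elim: k f f0 => [|k IHk] f f0 /=.
  by move=> cf x Ux; exact: continuous_comp (cf x Ux) (@sqrt_continuous R _).
move=> Cf; have [df dfv] := Cf.
have dsqrt x (Ux : U x) := sqrt_differentiable (f0 x Ux).
split=> [x Ux|v]; first exact: differentiable_comp (df x Ux) (dsqrt x Ux).
have s0 x : U x -> 2 * Num.sqrt (f x) != 0.
  by move=> Ux; rewrite mulf_neq0 // gt_eqF // sqrtr_gt0 f0.
apply: Ck_ext (CkM (dfv v) (CkV s0 (CkM (Ck_cst k 2) (IHk _ f0 (CkS Cf))))) => x Ux.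
rewrite (deriveE v (differentiable_comp (df x Ux) (dsqrt x Ux))).
rewrite (diff_comp (df x Ux) (dsqrt x Ux)) /=.
have dfE := deriveE v (df x Ux).
by rewrite dfE; exact/esym/diff_sqrtE/f0.
Qed.

Lemma Ck_sum {k} {I : Type} (r : seq I) (P : pred I) (F : I -> V -> R) :
  (forall i, Ck U k (F i)) -> Ck U k (fun x => \sum_(i <- r | P i) F i x).
Proof.
move=> CF; elim: r => [|a r IHr].
  by apply: Ck_ext (Ck_cst k 0) => x _; rewrite big_nil.
case Pa: (P a).
  by apply: Ck_ext (CkD (CF a) IHr) => x _; rewrite big_cons Pa.
by apply: Ck_ext IHr => x _; rewrite big_cons Pa.
Qed.

Lemma Ck_prod {k} {I : Type} (r : seq I) (P : pred I) (F : I -> V -> R) :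
  (forall i, Ck U k (F i)) -> Ck U k (fun x => \prod_(i <- r | P i) F i x).
Proof.
move=> CF; elim: r => [|a r IHr].
  by apply: Ck_ext (Ck_cst k 1) => x _; rewrite big_nil.
case Pa: (P a).
  by apply: Ck_ext (CkM (CF a) IHr) => x _; rewrite big_cons Pa.
by apply: Ck_ext IHr => x _; rewrite big_cons Pa.
Qed.

End Ck_calculus.

Lemma Ck_subset {R : realType} {V : normedModType R} (U U' : set V) k (f : V -> R) :
  U' `<=` U -> Ck U k f -> Ck U' k f.
Proof.
move=> sU; elim: k f => [|k IHk] f /=; first by move=> cf x /sU; exact: cf.
by case=> df dfv; split=> [x /sU|v]; [exact: df | exact: IHk].
Qed.

Lemma smooth_id {R : realType} : smooth_on setT (fun t : R => t).
Proof.
elim=> [|k IHk] /=; first by move=> x _; exact: cvg_id.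
split=> [x _|v]; first exact: (@ex_diff _ _ _ _ _ _ _ (is_diff_id x)).
by apply: (Ck_ext _ openT _ (Ck_cst _ openT k v)) => x _; rewrite derive_id.
Qed.

Lemma Ck_comp_linear {R : realType} {V W : normedModType R} (U : set V)
    (L : V -> W) (f : W -> R) k :
  linear L -> (forall x, differentiable L x) -> smooth_on setT f ->
  Ck U k (fun x => f (L x)).
Proof.
move=> linL dL; elim: k f => [|k IHk] f sf /=.
  move=> x _; apply: continuous_comp (sf 0%N (L x) I).
  exact: differentiable_continuous (dL x).
split=> [x _|v]; first exact: differentiable_comp (dL x) ((sf 1%N).1 (L x) I).
have -> : (fun x => derive (fun y => f (L y)) x v) = fun x => derive f (L x) (L v).
  apply: funext => x; rewrite /derive.
  suff -> : (fun h : R => h^-1 *: (f (L (h *: v + x)) - f (L x))) =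
            (fun h : R => h^-1 *: (f (h *: L v + L x) - f (L x))) by [].
  by apply: funext => h; rewrite linL.
exact: IHk (fun n => (sf n.+1).2 (L v)).
Qed.

Lemma Ck_entry {R : realType} {m n} (U : set 'M[R]_(m, n)) k i j :
  Ck U k (fun N : 'M[R]_(m, n) => N i j).
Proof.
apply: (Ck_comp_linear _ (fun N : 'M[R]_(m, n) => N i j) (fun t => t)) smooth_id.
  by move=> a A B; rewrite !mxE.
by move=> N; exact: differentiable_coord.
Qed.

Lemma differentiable_row {R : realType} {V : normedModType R} {n}
    (F : V -> 'rV[R]_n) x :
  (forall j, differentiable (fun y => F y ord0 j) x) -> differentiable F x.
Proof.
move=> dF; have -> : F = \sum_(j < n) (fun y => F y ord0 j *: delta_mx ord0 j).
  by rewrite fct_sumE; apply: funext => y; exact: row_sum_delta.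
by apply: differentiable_sum => j; exact: differentiableZl.
Qed.

Section phase_space_coordinates.
Context {R : realType}.
Variable U : set 'rV[R]_8.

Lemma Ck_tauco k : Ck U k (@tauco R).
Proof. exact: Ck_entry. Qed.

Lemma Ck_xico k i : Ck U k (fun w : 'rV[R]_8 => xico w ord0 i).
Proof.
have -> : (fun w : 'rV[R]_8 => xico w ord0 i) = fun w => w ord0 (inord (i + 5)).
  by apply: funext => w; rewrite mxE.
exact: Ck_entry.
Qed.

Lemma Ck_xco k (f : 'rV[R]_3 -> R) : smooth_on setT f -> Ck U k (fun w => f (xco w)).
Proof.
apply: Ck_comp_linear => [a v w | w]; first by apply/rowP => i; rewrite !mxE.
by apply: differentiable_row => j; under eq_fun do rewrite mxE; exact: differentiable_coord.
Qed.

End phase_space_coordinates.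

Lemma open_setI_neq0 {R : realType} {V : normedModType R} (U : set V) (F : V -> R) :
  open U -> (forall x, U x -> {for x, continuous F}) -> open (U `&` [set x | F x != 0]).
Proof.
move=> oU cF; rewrite openE => x [Ux Fx].
apply: filterI; first exact: open_nbhs_nbhs.
exact: cvgr_neq0 (cF x Ux) Fx.
Qed.

Section adjugate_parametrix.
Context {R : realType} {V : normedModType R}.
Variable U : set V.
Hypothesis oU : open U.

Lemma Ck_det k n (P : V -> 'M[R]_n) :
  (forall a b, Ck U k (fun w => P w a b)) -> Ck U k (fun w => \det (P w)).
Proof.
move=> CP; apply: (Ck_sum _ oU) => s.
by apply: (CkM _ oU); [exact: Ck_cst | exact: (Ck_prod _ oU)].
Qed.

Lemma Ck_cofactor k n (P : V -> 'M[R]_n) i j :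
  (forall a b, Ck U k (fun w => P w a b)) -> Ck U k (fun w => cofactor (P w) i j).
Proof.
move=> CP; apply: (CkM _ oU); first exact: Ck_cst.
by apply: Ck_det => a b; apply: (Ck_ext _ oU _ (CP _ _)) => w _; rewrite !mxE.
Qed.

Lemma adj_parametrix n (P : V -> 'M[R]_n) (q Q : V -> R) :
  (forall w, U w -> Q w != 0) -> smooth_on U Q ->
  (forall a b, smooth_on U (fun w => P w a b)) ->
  (forall w, U w -> \det (P w) = q w * Q w) ->
  exists pt : V -> 'M[R]_n, (forall a b, smooth_on U (fun w => pt w a b)) /\
    (forall w, U w -> pt w *m P w = (q w)%:M).
Proof.
move=> Q0 sQ sP detP; exists (fun w => (Q w)^-1 *: \adj (P w)); split.
  move=> a b k; apply: (Ck_ext _ oU (f := fun w => (Q w)^-1 * cofactor (P w) b a)).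
    by move=> w _; rewrite !mxE.
  apply: (CkM _ oU); first exact: (CkV _ oU) Q0 (sQ k).
  by apply: Ck_cofactor => c d; exact: sP.
move=> w Uw; rewrite -scalemxAl mul_adj_mx detP // scale_scalar_mx.
by rewrite mulrC -mulrA mulfV ?Q0 // mulr1.
Qed.

End adjugate_parametrix.

Lemma local_adj_parametrix {R : realType} {V : normedModType R} {n} {G U : set V}
    {P : V -> 'M[R]_n} {q Q : V -> R} {z} :
  open G -> open U -> G z -> U z -> Q z != 0 ->
  smooth_on U q -> smooth_on U Q -> (forall a b, smooth_on U (fun w => P w a b)) ->
  (forall w, U w -> \det (P w) = q w * Q w) ->
  exists W : set V, open W /\ W z /\ W `<=` G /\ smooth_on W q /\
    exists pt : V -> 'M[R]_n, (forall a b, smooth_on W (fun w => pt w a b)) /\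
      (forall w, W w -> pt w *m P w = (q w)%:M).
Proof.
move=> oG oU Gz Uz Qz sq sQ sP detP.
pose W := G `&` (U `&` [set w | Q w != 0]).
have oW : open W.
  by apply: openI => //; apply: open_setI_neq0 => // x Ux; exact: (sQ 0%N x Ux).
have WU : W `<=` U by move=> w [_ []].
exists W; do 3!split => //; first by move=> w [].
split; first by move=> k; exact: Ck_subset WU (sq k).
apply: (adj_parametrix _ oW _ P q Q).
- by move=> w [_ [_ ?]].
- by move=> k; exact: Ck_subset WU (sQ k).
- by move=> a b k; exact: Ck_subset WU (sP a b k).
- by move=> w /WU; exact: detP.
Qed.

Lemma derive_quadratic_along {R : realType} {V : normedModType R} (f : V -> R) z v
    (c d : R) :
  (forall h, f (h *: v + z) - f z = h * (c + d * h)) -> 'D_v f z = c.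
Proof.
move=> fq; apply: cvg_lim => //.
apply: (@cvg_trans _ ((fun h : R => c + d * h) @ 0^')).
  apply: near_eq_cvg; near=> h; have h0 : h != 0 by near: h; exact: nbhs_dnbhs_neq.
  by rewrite /= fq -[_ *: _]/(_ * _) mulKf.
suff : (fun h : R => c + d * h) @ 0^' --> c + d * 0 by rewrite mulr0 addr0.
exact: cvg_within_filter (cvgD (cvg_cst c) (cvgM (cvg_cst d) cvg_id)).
Unshelve. all: by end_near.
Qed.

Section tau_direction.
Context {R : realType}.
Local Notation e_tau := (delta_mx ord0 (inord 4) : 'rV[R]_8).

Lemma shift_tau (h : R) z :
  [/\ xco (h *: e_tau + z) = xco z, xico (h *: e_tau + z) = xico z
    & tauco (h *: e_tau + z) = tauco z + h].
Proof.
have off (i : nat) : (i < 8)%N -> i != 4%N ->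
    (h *: e_tau + z) ord0 (inord i) = z ord0 (inord i).
  by move=> i8 i4; rewrite !mxE eqxx -val_eqE /= !inordK // (negbTE i4) mulr0 add0r.
split; try by apply/rowP => -[[|[|[|//]]] ?]; rewrite mxE off ?mxE.
by rewrite /tauco !mxE !eqxx mulr1 addrC.
Qed.

Lemma pd_tau_wave (a : 'rV[R]_3 -> R) (s : 'rV[R]_3 -> 'rV[R]_3 -> R) z :
  pd (fun w => a (xco w) * (tauco w ^+ 2 - s (xco w) (xico w))) z 4 =
  2 * a (xco z) * tauco z.
Proof.
apply: (@derive_quadratic_along _ _ _ _ _ _ (a (xco z))) => h.
by have [-> -> ->] := shift_tau h z; ring.
Qed.

Lemma real_principal_type_at_pd_tau (q : 'rV[R]_8 -> R) z :
  differentiable q z -> pd q z 4 != 0 -> real_principal_type_at q z.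
Proof.
move=> dq dtau; have Hq0 : hamilton q z ord0 ord0 = pd q z 4 by rewrite mxE.
do 2!split => //; first by apply: contra dtau => /eqP Hq_eq0; rewrite -Hq0 Hq_eq0 mxE.
by case=> c Hq_radial; move: dtau; rewrite -Hq0 Hq_radial !mxE /= mulr0 eqxx.
Qed.

End tau_direction.

Lemma sum_ord3 (M : nmodType) (F : 'I_3 -> M) :
  \sum_(i < 3) F i = F (inord 0) + F (inord 1) + F (inord 2).
Proof.
rewrite !big_ord_recr big_ord0 /= add0r.
by congr (_ + _ + _); congr F; apply: val_inj; rewrite /= inordK.
Qed.

Lemma det_mx33 (R : comRingType) (A : 'M[R]_3) :
  let a i j := A (inord i) (inord j) in
  \det A = a 0 0 * (a 1 1 * a 2 2 - a 1 2 * a 2 1)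
         - a 0 1 * (a 1 0 * a 2 2 - a 1 2 * a 2 0)
         + a 0 2 * (a 1 0 * a 2 1 - a 1 1 * a 2 0).
Proof.
move=> a; have aE (i j : 'I_3) : A i j = a i j by rewrite /a !inord_val.
rewrite (expand_det_row _ ord0) !big_ord_recr big_ord0 /= /cofactor.
rewrite !(expand_det_row _ ord0) !big_ord_recr !big_ord0 /= /cofactor.
rewrite !det_mx11 !mxE !aE /= /bump /=.
by rewrite !add0n !expr0 !expr1 !mul1r sqrrN expr1n; ring.
Qed.

Section vectors3.
Context {R : realType}.
Implicit Types u v : 'rV[R]_3.

Lemma dot3C u v : dot3 u v = dot3 v u.
Proof. by apply: eq_bigr => i _; rewrite mulrC. Qed.

Lemma dot30l v : dot3 0 v = 0.
Proof. by rewrite /dot3 big1 // => i _; rewrite mxE mul0r. Qed.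

Lemma sqn3_cross u v : sqn3 (cross3 u v) = sqn3 u * sqn3 v - dot3 u v ^+ 2.
Proof. by rewrite /sqn3 /dot3 !sum_ord3 /cross3 !mxE !inordK //=; ring. Qed.

Lemma sqn3_ge0 u : 0 <= sqn3 u.
Proof. by rewrite /sqn3 /dot3 sum_ord3; nra. Qed.

Lemma sqn3_eq0 u : (sqn3 u == 0) = (u == 0).
Proof.
apply/eqP/eqP => [|->]; last by rewrite /sqn3 dot30l.
rewrite /sqn3 /dot3 sum_ord3 => u0.
have ui0 (i : nat) : (i < 3)%N -> u ord0 (inord i) = 0.
  by case: i => [|[|[|//]]] _; nra.
by apply/rowP => i; rewrite mxE -(ui0 i) // inord_val.
Qed.

Lemma sqn3_gt0 u : (0 < sqn3 u) = (u != 0).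
Proof. by rewrite lt_def sqn3_eq0 sqn3_ge0 andbT. Qed.

End vectors3.

Section mhd_algebra.
Context {R : realType}.
Variables (rho pr : 'rV[R]_3 -> R) (H : 'rV[R]_3 -> 'rV[R]_3) (gamma : R).
Local Notation csq := (csq rho pr gamma).
Local Notation hsq := (hsq rho H).
Local Notation bsq := (bsq rho H).
Local Notation cssq := (cssq rho pr H gamma).
Local Notation cfsq := (cfsq rho pr H gamma).
Local Notation qj := (qj rho pr H gamma).
Local Notation p2 := (p2 rho pr H gamma).

Definition disc (x xi : 'rV[R]_3) : R :=
  (csq x - hsq x) ^+ 2 * sqn3 xi ^+ 2 + 4 * bsq x xi * csq x * sqn3 xi.

Lemma prod_qj z :
  \prod_(k < 3) qj k z = q1 rho H z * q2 rho pr H gamma z * q3 rho pr H gamma z.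
Proof. by rewrite !big_ord_recr big_ord0 /= mul1r. Qed.

Lemma det_p2 z : rho (xco z) != 0 -> 0 <= disc (xco z) (xico z) ->
  \det (p2 z) = \prod_(k < 3) qj k z.
Proof.
move=> rho0 disc_ge0; rewrite prod_qj -mulrA.
have -> : q2 rho pr H gamma z * q3 rho pr H gamma z = rho (xco z) ^+ 2 *
    ((tauco z ^+ 2 - (csq (xco z) + hsq (xco z)) * sqn3 (xico z) / 2) ^+ 2
     - disc (xco z) (xico z) / 4).
  rewrite /q2 /q3 /cssq /cfsq -/(disc _ _) -[in RHS](sqr_sqrtr disc_ge0).
  by move: (Num.sqrt _) => s; field.
rewrite det_mx33 /p2 !mxE -!val_eqE /= !inordK //= /q1 /disc /csq /hsq /bsq.
by rewrite /sqn3 /dot3 !sum_ord3 /cross3 !mxE !inordK //=; field.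
Qed.

Definition cjsq (j : 'I_3) (x xi : 'rV[R]_3) : R :=
  if val j == 0%N then dot3 (H x) xi ^+ 2 / rho x
  else if val j == 1%N then cssq x xi else cfsq x xi.

Lemma qjE j z : rho (xco z) != 0 ->
  qj j z = rho (xco z) * (tauco z ^+ 2 - cjsq j (xco z) (xico z)).
Proof. by move=> rho0; case: j => [[|[|[|//]]] ?]; rewrite /qj /cjsq //= /q1; field. Qed.

Hypothesis rho_gt0 : forall x, 0 < rho x.
Hypothesis csq_gt0 : forall x, 0 < csq x.

Lemma disc_ge0 x xi : 0 <= disc x xi.
Proof.
have bsq_ge0 : 0 <= bsq x xi by rewrite /bsq divr_ge0 ?sqn3_ge0 ?ltW.
apply: addr_ge0; first exact: mulr_ge0 (sqr_ge0 _) (sqr_ge0 _).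
apply: mulr_ge0; last exact: sqn3_ge0.
apply: mulr_ge0; last exact: ltW.
exact: mulr_ge0.
Qed.

Section on_Dom.
Variable z : 'rV[R]_8.
Hypothesis Dom_z : Dom H z.
Local Notation x := (xco z).
Local Notation xi := (xico z).

Lemma xi_gt0 : 0 < sqn3 xi.
Proof. by rewrite sqn3_gt0; apply: contra (proj1 Dom_z) => /eqP ->; rewrite dot30l. Qed.

Lemma dot_sqr_gt0 : 0 < dot3 xi (H x) ^+ 2.
Proof. by rewrite lt_def sqr_ge0 sqrf_eq0 andbT; case: Dom_z. Qed.

Lemma disc_gt0 : 0 < disc x xi.
Proof.
have bsq_gt0 : 0 < bsq x xi by rewrite /bsq divr_gt0 // sqn3_gt0; case: Dom_z.
rewrite /disc ltr_wpDl //; first exact: mulr_ge0 (sqr_ge0 _) (sqr_ge0 _).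
apply: mulr_gt0; last exact: xi_gt0.
by apply: mulr_gt0; [exact: mulr_gt0 | exact: csq_gt0].
Qed.

Lemma sqrt_disc_lt : Num.sqrt (disc x xi) < (csq x + hsq x) * sqn3 xi.
Proof.
set A := (csq x + hsq x) * sqn3 xi.
have hsq_ge0 : 0 <= hsq x by rewrite /hsq divr_ge0 ?sqn3_ge0 ?ltW.
have A_gt0 : 0 < A by rewrite mulr_gt0 ?xi_gt0 // ltr_wpDr.
have gap : A ^+ 2 - disc x xi = 4 * csq x * sqn3 xi * (dot3 xi (H x) ^+ 2 / rho x).
  by rewrite /A /disc /hsq /bsq sqn3_cross; field; rewrite gt_eqF.
have : disc x xi < A ^+ 2.
  rewrite -subr_gt0 gap; apply: mulr_gt0; last exact: divr_gt0 dot_sqr_gt0 _.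
  by apply: mulr_gt0; [exact: mulr_gt0 | exact: xi_gt0].
by move=> disc_lt; rewrite -(gtr0_norm A_gt0) -sqrtr_sqr ltr_sqrt // exprn_gt0.
Qed.

Lemma cjsq_gt0 j : 0 < cjsq j x xi.
Proof.
have := sqrt_disc_lt; have := sqrtr_ge0 (disc x xi).
case: j => [[|[|[|//]]] ?]; rewrite /cjsq /cssq /cfsq -/(disc _ _) /=; try lra.
by rewrite dot3C divr_gt0 ?dot_sqr_gt0.
Qed.

End on_Dom.

End mhd_algebra.

Section mhd_smoothness.
Context {R : realType}.
Variables (rho pr : 'rV[R]_3 -> R) (H : 'rV[R]_3 -> 'rV[R]_3) (gamma : R).
Hypothesis rho_neq0 : forall x, rho x != 0.
Hypothesis rho_smooth : smooth_on setT rho.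
Hypothesis pr_smooth : smooth_on setT pr.
Hypothesis H_smooth : forall i, smooth_on setT (fun x => H x ord0 i).
Variable U : set 'rV[R]_8.
Hypothesis oU : open U.
Local Notation disc := (disc rho pr H gamma).
Local Notation cjsq := (cjsq rho pr H gamma).

Let Ck_H k i : Ck U k (fun w => H (xco w) ord0 i).
Proof. exact: Ck_xco _ _ _ (H_smooth i). Qed.

Let rho_xco_neq0 w : U w -> rho (xco w) != 0.
Proof. by move=> _; exact: rho_neq0. Qed.

Ltac Ck_solve := repeat first
  [ apply: (Ck_cst _ oU) | apply: (CkD _ oU) | apply: (CkM _ oU) | apply: (CkN _ oU)
  | apply: (CkX _ oU) | apply: (Ck_sum _ oU) | apply: (Ck_prod _ oU) | apply: (CkV _ oU)
  | exact: rho_xco_neq0 | apply: Ck_tauco | apply: Ck_xico | apply: Ck_H | apply: Ck_xco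
  | assumption | move=> ? ].

Lemma Ck_dot_xi_H k : Ck U k (fun w => dot3 (xico w) (H (xco w))).
Proof. rewrite /dot3; Ck_solve. Qed.

Lemma Ck_sqn_cross k : Ck U k (fun w => sqn3 (cross3 (xico w) (H (xco w)))).
Proof. under eq_fun do rewrite sqn3_cross; rewrite /sqn3 /dot3; Ck_solve. Qed.

Lemma Ck_p2 k a b : Ck U k (fun w => p2 rho pr H gamma w a b).
Proof. under eq_fun do rewrite mxE; rewrite /q1 /sqn3 /dot3; Ck_solve. Qed.

Hypothesis disc_gt0 : forall w, U w -> 0 < disc (xco w) (xico w).

Lemma Ck_qj k j : Ck U k (qj rho pr H gamma j).
Proof.
apply: (Ck_ext _ oU (f := fun w => rho (xco w) * (tauco w ^+ 2 - cjsq j (xco w) (xico w)))).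
  by move=> w _; rewrite qjE.
have Ck_sqrt_disc : Ck U k (fun w => Num.sqrt (disc (xco w) (xico w))).
  apply: (Ck_sqrt _ oU) disc_gt0 _; rewrite /disc /bsq.
  by under eq_fun do rewrite sqn3_cross; rewrite /csq /hsq /sqn3 /dot3; Ck_solve.
case: j => [[|[|[|//]]] ?]; rewrite /cjsq /= /cssq /cfsq -/(disc _ _).
all: by rewrite /csq /hsq /sqn3 /dot3; Ck_solve.
Qed.

End mhd_smoothness.

Section mhd_on_Dom.
Context {R : realType}.
Variables (rho pr : 'rV[R]_3 -> R) (H : 'rV[R]_3 -> 'rV[R]_3) (gamma : R).
Hypothesis rho_gt0 : forall x, 0 < rho x.
Hypothesis csq_gt0 : forall x, 0 < csq rho pr gamma x.
Hypothesis rho_smooth : smooth_on setT rho.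
Hypothesis pr_smooth : smooth_on setT pr.
Hypothesis H_smooth : forall i, smooth_on setT (fun x => H x ord0 i).
Local Notation qj := (qj rho pr H gamma).

Let rho_neq0 x : rho x != 0. Proof. by rewrite gt_eqF. Qed.

Lemma open_Dom : open (Dom H).
Proof.
have -> : Dom H = setT `&` [set w | dot3 (xico w) (H (xco w)) != 0]
                  `&` [set w | sqn3 (cross3 (xico w) (H (xco w))) != 0].
  by apply/seteqP; split=> w; rewrite /= sqn3_eq0 => -[] //; case.
apply: open_setI_neq0 => [|w _]; last exact: (Ck_sqn_cross _ H_smooth _ openT 0 w I).
apply: open_setI_neq0 => [|w _]; [exact: openT | exact: (Ck_dot_xi_H _ H_smooth _ openT 0 w I)].
Qed.

Lemma smooth_qj j : smooth_on (Dom H) (qj j).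
Proof.
move=> k; apply: Ck_qj => //; first exact: open_Dom.
by move=> w Dw; exact: disc_gt0.
Qed.

Lemma smooth_p2 a b : smooth_on (Dom H) (fun w => p2 rho pr H gamma w a b).
Proof. by move=> k; apply: Ck_p2 => //; exact: open_Dom. Qed.

Lemma real_principal_type_qj j z :
  Dom H z -> qj j z = 0 -> real_principal_type_at (qj j) z.
Proof.
move=> Dz qj0; apply: real_principal_type_at_pd_tau; first exact: (smooth_qj j 1%N).1.
have -> : qj j = fun w =>
    rho (xco w) * (tauco w ^+ 2 - cjsq rho pr H gamma j (xco w) (xico w)).
  by apply: funext => w; rewrite qjE.
rewrite pd_tau_wave !mulf_neq0 //; apply: contra_eq_neq qj0 => tau0.
by rewrite qjE // tau0 expr0n /= sub0r mulrN oppr_eq0 mulf_neq0 // gt_eqF // cjsq_gt0.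
Qed.

End mhd_on_Dom.

Theorem proposition5p2 (R : realType) (rho pr : 'rV[R]_3 -> R)
    (H : 'rV[R]_3 -> 'rV[R]_3) (gamma : R) :
  (forall x, 0 < rho x) ->
  smooth_on setT rho -> smooth_on setT pr ->
  (forall i : 'I_3, smooth_on setT (fun x => H x ord0 i)) ->
  (forall x, 0 < csq rho pr gamma x) ->
  (forall x, 0 < sqn3 (H x)) ->
  (forall x, sqn3 (H x) != rho x * csq rho pr gamma x) ->
  forall Gam : 'I_3 -> set 'rV[R]_8,
  (forall j, open (Gam j)) -> (forall j, conic (Gam j)) ->
  (forall j k, j != k -> Gam j `&` Gam k = set0) ->
  (forall j z, Dom H z -> qj rho pr H gamma j z = 0 -> Gam j z) ->
  (* Char P = {q = 0} on the region considered *)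
  (forall z, Dom H z ->
     (\det (p2 rho pr H gamma z) = 0 <->
      exists j, Gam j z /\ qj rho pr H gamma j z = 0)) /\
  (* at every point of Char P: local parametrix-type factorization and real principal type *)
  (forall z, Dom H z -> \det (p2 rho pr H gamma z) = 0 ->
     exists j : 'I_3, Gam j z /\ qj rho pr H gamma j z = 0 /\
       exists W : set 'rV[R]_8, open W /\ W z /\ W `<=` Gam j /\
         smooth_on W (qj rho pr H gamma j) /\
         (exists pt : 'rV[R]_8 -> 'M[R]_3,
            (forall a b, smooth_on W (fun w => pt w a b)) /\
            (forall w, W w -> pt w *m p2 rho pr H gamma w = (qj rho pr H gamma j w)%:M)) /\
         real_principal_type_at (qj rho pr H gamma j) z).
Proof.
move=> rho_gt0 rho_smooth pr_smooth H_smooth csq_gt0 _ _ Gam Gam_open _ Gam_disjoint Gam_cover.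
have rho_neq0 x : rho x != 0 by rewrite gt_eqF.
have detE z : \det (p2 rho pr H gamma z) = \prod_(k < 3) qj rho pr H gamma k z.
  by apply: det_p2 => //; exact: disc_ge0.
have char z : Dom H z -> (\det (p2 rho pr H gamma z) = 0 <->
    exists j, Gam j z /\ qj rho pr H gamma j z = 0).
  move=> Dz; rewrite detE; split => [/eqP/prodf_eq0 [j _ /eqP qj0] | [j [_ qj0]]].
    by exists j; split => //; exact: Gam_cover.
  by apply/eqP/prodf_eq0; exists j => //; apply/eqP.
split => // z Dz /(char z Dz) [j [Gj qj0]]; exists j; do 2!split => //.
pose Q w := \prod_(k | k != j) qj rho pr H gamma k w.
have Qz : Q z != 0.
  apply/prodf_neq0 => k kj; apply/eqP => qk0.
  have : (Gam j `&` Gam k) z by split => //; exact: Gam_cover.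
  by rewrite Gam_disjoint // eq_sym.
have Dom_open : open (Dom H) by exact: open_Dom.
have sq k : smooth_on (Dom H) (qj rho pr H gamma k) by exact: smooth_qj.
have sQ : smooth_on (Dom H) Q by move=> n; apply: Ck_prod => // k; exact: sq.
have sp2 a b : smooth_on (Dom H) (fun w => p2 rho pr H gamma w a b) by exact: smooth_p2.
have [W [oW [Wz [WGam [sqW ptW]]]]] := local_adj_parametrix (Gam_open j) Dom_open Gj Dz Qz
  (sq j) sQ sp2 (fun w _ => etrans (detE w) (bigD1 j isT)).
exists W; do 5!split => //.
exact: real_principal_type_qj.
Qed.
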